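(* Let $A=\mathrm{diag}(\mathbf{a})$ with $\mathbf{a}\in\mathbb{R}^n$, $\beta>0$, $f(\mathbf{z})=\frac12\mathbf{z}^*A\mathbf{z}+\frac{\beta}{2}\sum_k|z_k|^4$. A point $\mathbf{z}\in\mathbb{CS}^{n-1}$ is a local minimizer of $f$ on $\mathbb{CS}^{n-1}$ if and only if $\mathbf{z}$ is stationary and $H=A+2\beta\,\mathrm{diag}(|\mathbf{z}|^2)-2\lambda I\succeq0$, where $\lambda=\frac12\mathbf{z}^*A\mathbf{z}+\beta\|\mathbf{z}\|_4^4$. Moreover, every local minimizer $\mathbf{z}$ satisfies $z_k=\sqrt{u_k}\,e^{i\theta_k}$ for some $\theta_k\in[0,2\pi)$, $k\in[n]$, where $\mathbf{u}=\mathcal{P}_{\Delta_n}(-\mathbf{a}/(2\beta))$.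
   Context: $\mathbb{CS}^{n-1}$ is the unit sphere of $\mathbb{C}^n$; stationarity means $[A+2\beta\,\mathrm{diag}(|\mathbf{z}|^2)]\mathbf{z}=2\lambda\mathbf{z}$ with $|\mathbf{z}|^2=(|z_1|^2,\dots,|z_n|^2)$. $\Delta_n=\{\mathbf{u}\in\mathbb{R}^n:u_k\ge0,\ \sum_ku_k=1\}$ is the simplex and $\mathcal{P}_{\Delta_n}$ is the Euclidean projection onto it. *)

From HB Require Import structures.
From mathcomp Require Import all_boot all_order all_algebra.
From mathcomp Require Import complex.
From mathcomp Require Import reals trigo.
Set Implicit Arguments. Unset Strict Implicit. Unset Printing Implicit Defensive.
Import Order.TTheory GRing.Theory Num.Theory ComplexField.
Local Open Scope ring_scope.

Section Defs.
Variables (R : realType) (n : nat).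
Notation C := R[i].

Definition cmod (w : C) : R := Normc.normc w.

Definition abs2 (z : 'I_n -> C) (k : 'I_n) : R := cmod (z k) ^+ 2.

Definition Adiag (a : 'I_n -> R) : 'M[C]_n := diag_mx (\row_k ((a k)%:C)%C).

Definition colv (z : 'I_n -> C) : 'cV[C]_n := \col_k z k.
Definition adj (v : 'cV[C]_n) : 'rV[C]_n := map_mx conjc v^T.

Definition qform (M : 'M[C]_n) (v : 'cV[C]_n) : C := (adj v *m M *m v) 0 0.

Definition on_sphere (z : 'I_n -> C) : Prop := \sum_k abs2 z k = 1.

(* f(z) = 1/2 z^* A z + beta/2 sum_k |z_k|^4 (real-valued; z^*Az is real since A is real diagonal) *)
Definition fobj (a : 'I_n -> R) (beta : R) (z : 'I_n -> C) : R :=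
  2^-1 * complex.Re (qform (Adiag a) (colv z)) + beta / 2 * \sum_k cmod (z k) ^+ 4.

Definition lam (a : 'I_n -> R) (beta : R) (z : 'I_n -> C) : R :=
  2^-1 * complex.Re (qform (Adiag a) (colv z)) + beta * \sum_k cmod (z k) ^+ 4.

Definition local_min_sphere (a : 'I_n -> R) (beta : R) (z : 'I_n -> C) : Prop :=
  on_sphere z /\
  exists eps : R, 0 < eps /\
    forall w : 'I_n -> C, on_sphere w ->
      \sum_k cmod (w k - z k) ^+ 2 < eps ^+ 2 -> fobj a beta z <= fobj a beta w.

Definition Mstat (a : 'I_n -> R) (beta : R) (z : 'I_n -> C) : 'M[C]_n :=
  Adiag a + diag_mx (\row_k ((2 * beta * abs2 z k)%:C)%C).

Definition stationary (a : 'I_n -> R) (beta : R) (z : 'I_n -> C) : Prop :=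
  exists l : R, Mstat a beta z *m colv z = ((2 * l)%:C)%C *: colv z.

Definition Hmat (a : 'I_n -> R) (beta : R) (z : 'I_n -> C) : 'M[C]_n :=
  Mstat a beta z - ((2 * lam a beta z)%:C)%C%:M.

Definition psd (M : 'M[C]_n) : Prop := forall v : 'cV[C]_n, 0 <= qform M v.

Definition in_simplex (u : 'I_n -> R) : Prop :=
  (forall k, 0 <= u k) /\ \sum_k u k = 1.
Definition is_proj_simplex (x u : 'I_n -> R) : Prop :=
  in_simplex u /\
  forall v, in_simplex v -> \sum_k (u k - x k) ^+ 2 <= \sum_k (v k - x k) ^+ 2.

End Defs.

From HB Require Import structures.
From mathcomp Require Import all_boot all_order all_algebra.
From mathcomp Require Import complex.
From mathcomp Require Import reals trigo.
From mathcomp Require Import ring lra.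
Set Implicit Arguments. Unset Strict Implicit. Unset Printing Implicit Defensive.
Import Order.TTheory GRing.Theory Num.Theory ComplexField.
Local Open Scope ring_scope.
Local Open Scope complex_scope.

(* Write [u = |z|^2]. Then [2 f(z) = energy u] with [energy u = sum_k a_k u_k + beta u_k^2],
   a convex quadratic on the simplex, and [z |-> |z|^2] maps the sphere onto the simplex.
   Conversely, keeping the phases of [z], [v |-> sqrt v * phase z] lifts the simplex back
   to the sphere continuously ([|sqrt v - sqrt u|^2 <= |v - u|]).  Hence [z] is a local
   minimiser of [f] iff [u] is a local minimiser of [energy] on the simplex, iff (by
   convexity) [grad energy(u) . (v - u) >= 0] for all [v] in the simplex.  For the linear
   form this says: [a_k + 2 beta u_k] equals a constant [2 lambda] on the support of [u]
   and is at least [2 lambda] elsewhere, i.e. stationarity and [H >= 0], as [H] is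
   diagonal.  Finally [energy v = beta |v + a/(2 beta)|^2 + const], so the same
   inequality makes [u] the projection of [-a/(2 beta)] onto the simplex. *)

Section ComplexPolar.
Variable R : realType.
Local Notation C := R[i].

Lemma cmod_ge0 (w : C) : 0 <= cmod w.
Proof. by case: w => x y; rewrite /cmod /= sqrtr_ge0. Qed.

Lemma cmod_sqr (w : C) : cmod w ^+ 2 = complex.Re w ^+ 2 + complex.Im w ^+ 2.
Proof. by case: w => x y /=; rewrite /cmod /= sqr_sqrtr // addr_ge0 // sqr_ge0. Qed.

Lemma mul_conjc (w : C) : w^* * w = (cmod w ^+ 2)%:C.
Proof.
rewrite cmod_sqr; case: w => x y /=; simpc.
by apply/eqP; rewrite eq_complex /=; apply/andP; split; apply/eqP; ring.
Qed.

Lemma cmod_real (x : R) : cmod x%:C = `|x|.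
Proof. by rewrite /cmod /= expr0n /= addr0 sqrtr_sqr. Qed.

Lemma cmod_eq0 (w : C) : (cmod w == 0) = (w == 0).
Proof.
apply/eqP/eqP => [|->]; first exact: Normc.eq0_normc.
exact: Normc.normc0.
Qed.

Lemma cmodM (v w : C) : cmod (v * w) = cmod v * cmod w.
Proof. exact: Normc.normcM. Qed.

Definition phase (w : C) : C := if w == 0 then 1 else w / (cmod w)%:C.

Lemma cmod_phase (w : C) : cmod (phase w) = 1.
Proof.
rewrite /phase; case: eqP => [_|/eqP w0]; first exact: Normc.normc1.
rewrite cmodM [cmod _^-1]Normc.normcV -/(cmod _) cmod_real ger0_norm ?cmod_ge0 // mulfV //.
by rewrite cmod_eq0.
Qed.

Lemma cmod_real_phase (x : R) (w : C) : cmod (x%:C * phase w) = `|x|.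
Proof. by rewrite cmodM cmod_phase mulr1 cmod_real. Qed.

Lemma polar_phase (w : C) : w = (cmod w)%:C * phase w.
Proof.
rewrite /phase; case: eqP => [->|/eqP w0]; first by rewrite mulr1 /cmod Normc.normc0.
rewrite mulrC divfK //; apply/eqP => -[] /eqP.
by rewrite cmod_eq0 (negPf w0).
Qed.

(* The argument in [[0, 2 pi)]; only meaningful on the unit circle, as [acos] is applied to [Re w]. *)
Definition carg (w : C) : R :=
  if 0 <= complex.Im w then acos (complex.Re w) else 2 * pi - acos (complex.Re w).

Lemma unit_carg (w : C) : cmod w = 1 ->
  0 <= carg w < 2 * pi /\ w = (cos (carg w) +i* sin (carg w))%C.
Proof.
case: w => c s w_unit; rewrite /carg /=.
have cs_sqr : c ^+ 2 + s ^+ 2 = 1 by rewrite -(cmod_sqr (c +i* s)%C) w_unit expr1n.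
have c_bound : -1 <= c <= 1 by apply/andP; split; nra.
have c_itv : c \in `[-1, 1] by rewrite in_itv /= c_bound.
have sin_acos_c : sin (acos c) = `|s|.
  by rewrite sin_acos // (_ : 1 - c ^+ 2 = s ^+ 2) ?sqrtr_sqr //; lra.
have pi_gt0 := pi_gt0 R.
have acos_le_pi : acos c <= pi by apply: acos_lepi.
have [s_ge0|s_lt0] := lerP 0 s.
  split; last by rewrite acosK // sin_acos_c ger0_norm.
  by rewrite acos_ge0 //= (le_lt_trans acos_le_pi) //; lra.
have c_lt1 : c < 1 by nra.
have acos_gt0 : 0 < acos c by apply: acos_gt0; rewrite c_lt1 andbT; case/andP: c_bound.
split; first by apply/andP; split; lra.
rewrite cosB sinB mulr_natl cos2pi sin2pi acosK // sin_acos_c ltr0_norm //.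
by congr Complex; lra.
Qed.

End ComplexPolar.

Lemma sqr_sqrtrB_le (R : rcfType) (x y : R) : 0 <= x -> 0 <= y ->
  (Num.sqrt x - Num.sqrt y) ^+ 2 <= `|x - y|.
Proof.
move=> x_ge0 y_ge0; rewrite -{2}(sqr_sqrtr x_ge0) -{2}(sqr_sqrtr y_ge0).
have := sqrtr_ge0 x; have := sqrtr_ge0 y.
set p := Num.sqrt x; set q := Num.sqrt y => q_ge0 p_ge0.
have [pq|pq] := lerP p q.
  by rewrite ler0_norm; [nra | rewrite subr_le0 ler_pXn2r].
by rewrite ger0_norm; [nra | rewrite subr_ge0 ler_pXn2r // ltW].
Qed.

Lemma linear_term_ge0 (R : realFieldType) (s q t0 : R) : 0 < t0 ->
  (forall t, 0 < t <= t0 -> 0 <= t * s + t ^+ 2 * q) -> 0 <= s.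
Proof.
move=> t0_gt0 H; rewrite leNgt; apply/negP => s_lt0.
have [q_le0|q_gt0] := leP q 0.
  by have := H t0; rewrite t0_gt0 lexx => /(_ isT); nra.
pose t := Num.min t0 (- s / (2 * q)).
have t_gt0 : 0 < t by rewrite lt_min t0_gt0 /= divr_gt0 // ?oppr_gt0 // mulr_gt0.
have := H t; rewrite t_gt0 ge_min lexx /= => /(_ isT).
have : t * (2 * q) <= - s by rewrite -ler_pdivlMr ?mulr_gt0 // ge_min lexx orbT.
nra.
Qed.

Lemma sum_support_const (R : pzSemiRingType) (n : nat) (c u : 'I_n -> R) (l : R) :
  \sum_k u k = 1 -> (forall k, u k != 0 -> c k = l) -> \sum_k c k * u k = l.
Proof.
move=> u_sum1 c_supp; rewrite -[RHS]mulr1 -u_sum1 mulr_sumr.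
apply: eq_bigr => k _; have [->|uk] := eqVneq (u k) 0; first by rewrite !mulr0.
by rewrite c_supp.
Qed.

Section Simplex.
Variables (R : realType) (n : nat).
Implicit Types (c u v w : 'I_n -> R).

Definition simplex_vertex (j : 'I_n) : 'I_n -> R := fun k => (k == j)%:R.

Lemma in_simplex_vertex j : in_simplex (simplex_vertex j).
Proof.
split=> [k|]; first by rewrite ler0n.
by rewrite (bigD1 j) //= big1 ?addr0 /simplex_vertex ?eqxx // => k /negPf ->.
Qed.

Definition segment u v (t : R) : 'I_n -> R := fun k => u k + t * (v k - u k).

Lemma in_simplex_segment u v t : in_simplex u -> in_simplex v -> 0 <= t <= 1 ->
  in_simplex (segment u v t).
Proof.
move=> [u_ge0 u_sum1] [v_ge0 v_sum1] /andP[t_ge0 t_le1]; split=> [k|].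
  by rewrite /segment; have := u_ge0 k; have := v_ge0 k; nra.
by rewrite big_split /= -mulr_sumr sumrB u_sum1 v_sum1 subrr mulr0 addr0.
Qed.

Lemma sum_normB_simplex_le2 u v : in_simplex u -> in_simplex v ->
  \sum_k `|v k - u k| <= 2.
Proof.
move=> [u_ge0 u_sum1] [v_ge0 v_sum1].
apply: le_trans (_ : \sum_k (v k + u k) <= _); last by rewrite big_split /= u_sum1 v_sum1.
by apply: ler_sum => k _; rewrite (le_trans (ler_normB _ _)) // !ger0_norm.
Qed.

Lemma simplex_KKTP c u : in_simplex u ->
  (forall v, in_simplex v -> 0 <= \sum_k c k * (v k - u k)) <->
  exists l, (forall k, l <= c k) /\ (forall k, u k != 0 -> c k = l).
Proof.
move=> [u_ge0 u_sum1]; split=> [VI|[l [l_le c_supp]] v [v_ge0 v_sum1]].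
  pose l := \sum_k c k * u k.
  have l_le j : l <= c j.
    have vertex_sum : \sum_k c k * simplex_vertex j k = c j.
      rewrite (bigD1 j) //= /simplex_vertex eqxx mulr1 big1 ?addr0 //.
      by move=> k /negPf ->; rewrite mulr0.
    have := VI _ (in_simplex_vertex j); under eq_bigr do rewrite mulrBr.
    by rewrite sumrB vertex_sum subr_ge0.
  exists l; split=> // j uj.
  have slack_ge0 k : true -> 0 <= u k * (c k - l) by rewrite mulr_ge0 ?subr_ge0.
  have slack_sum0 : \sum_k u k * (c k - l) = 0.
    under eq_bigr do rewrite mulrBr.
    apply/eqP; rewrite sumrB -mulr_suml u_sum1 mul1r subr_eq0.
    by apply/eqP/eq_bigr => k _; rewrite mulrC.
  have /eqP := psumr_eq0P slack_ge0 slack_sum0 (i := j) isT.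
  by rewrite mulf_eq0 (negPf uj) subr_eq0 => /eqP.
under eq_bigr do rewrite mulrBr.
rewrite sumrB (sum_support_const u_sum1 c_supp) subr_ge0.
apply: le_trans (_ : \sum_k l * v k <= _); first by rewrite -mulr_sumr v_sum1 mulr1.
by apply: ler_sum => k _; rewrite ler_wpM2r.
Qed.

End Simplex.

Section Energy.
Variables (R : realType) (n : nat) (a : 'I_n -> R) (beta : R).
Implicit Types (u v w : 'I_n -> R).

Definition energy u : R := \sum_k (a k * u k + beta * u k ^+ 2).
Definition energy_grad u k : R := a k + 2 * beta * u k.
Definition slope u v : R := \sum_k energy_grad u k * (v k - u k).
Definition sqdist u v : R := \sum_k (u k - v k) ^+ 2.

Lemma sqdist_ge0 u v : 0 <= sqdist u v.
Proof. by apply: sumr_ge0 => k _; rewrite sqr_ge0. Qed.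

Lemma energyB u v : energy v - energy u = slope u v + beta * sqdist v u.
Proof.
rewrite /energy /slope /sqdist -sumrB mulr_sumr -big_split; apply: eq_bigr => k _ /=.
by rewrite /energy_grad; ring.
Qed.

Lemma slope_segment u v t : slope u (segment u v t) = t * slope u v.
Proof. by rewrite /slope mulr_sumr; apply: eq_bigr => k _; rewrite /segment; ring. Qed.

Lemma sqdist_segment u v t : sqdist (segment u v t) u = t ^+ 2 * sqdist v u.
Proof. by rewrite /sqdist mulr_sumr; apply: eq_bigr => k _; rewrite /segment; ring. Qed.

Definition simplex_local_min u : Prop :=
  exists2 eps : R, 0 < eps & forall v, in_simplex v ->
    \sum_k `|v k - u k| < eps -> energy u <= energy v.

Lemma simplex_local_min_slope u : in_simplex u -> simplex_local_min u ->
  forall v, in_simplex v -> 0 <= slope u v.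
Proof.
move=> u_simplex [eps eps_gt0 u_min] v v_simplex.
apply: (@linear_term_ge0 _ _ (beta * sqdist v u) (Num.min 1 (eps / 4))).
  by rewrite lt_min ltr01 divr_gt0.
move=> t /andP[t_gt0]; rewrite le_min => /andP[t_le1 t_le_eps].
have seg_simplex : in_simplex (segment u v t).
  by apply: in_simplex_segment => //; rewrite (ltW t_gt0) t_le1.
have seg_near : \sum_k `|segment u v t k - u k| < eps.
  have -> : \sum_k `|segment u v t k - u k| = t * \sum_k `|v k - u k|.
    rewrite mulr_sumr; apply: eq_bigr => k _.
    by rewrite /segment addrAC subrr add0r normrM gtr0_norm.
  have := sum_normB_simplex_le2 u_simplex v_simplex; nra.
have := u_min _ seg_simplex seg_near.
by rewrite -subr_ge0 energyB slope_segment sqdist_segment mulrCA.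
Qed.

Hypothesis beta_gt0 : 0 < beta.

Lemma slope_ge0_energy_min u v : 0 <= slope u v -> energy u <= energy v.
Proof.
by move=> slope_ge0; rewrite -subr_ge0 energyB addr_ge0 // mulr_ge0 ?sqdist_ge0 ?ltW.
Qed.

(* [energy v = beta * sqdist v x + const], which ties minimisation to projection onto the simplex. *)
Lemma sqdist_projB u v (x := fun k => - a k / (2 * beta)) :
  sqdist v x - sqdist u x = beta^-1 * slope u v + sqdist v u.
Proof.
have beta_neq0 : beta != 0 by rewrite gt_eqF.
rewrite /slope /sqdist -sumrB mulr_sumr -big_split; apply: eq_bigr => k _ /=.
by rewrite /energy_grad /x; field.
Qed.

Lemma slope_ge0_proj_simplex w u : in_simplex w ->
  (forall v, in_simplex v -> 0 <= slope w v) ->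
  is_proj_simplex (fun k => - a k / (2 * beta)) u -> forall k, u k = w k.
Proof.
move=> w_simplex w_VI [u_simplex u_proj].
have dist0 : sqdist u w = 0.
  have := sqdist_projB w u; have := u_proj _ w_simplex.
  have := w_VI _ u_simplex; have := sqdist_ge0 u w.
  have : 0 < beta^-1 by rewrite invr_gt0.
  rewrite /sqdist; nra.
move=> k; apply/eqP; rewrite -subr_eq0 -sqrf_eq0; apply/eqP.
by apply: (psumr_eq0P _ dist0) => // i _; rewrite sqr_ge0.
Qed.

End Energy.

Section Sphere.
Variables (R : realType) (n : nat).
Local Notation C := R[i].
Implicit Types (z : 'I_n -> C) (u : 'I_n -> R).

Lemma abs2_ge0 z k : 0 <= abs2 z k.
Proof. exact: sqr_ge0. Qed.

Lemma abs2_eq0 z k : (abs2 z k == 0) = (z k == 0).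
Proof. by rewrite /abs2 sqrf_eq0 cmod_eq0. Qed.

Lemma sphere_simplex z : on_sphere z -> in_simplex (abs2 z).
Proof. by split=> // k; exact: abs2_ge0. Qed.

Lemma qform_real_diag (d : 'I_n -> R) (v : 'cV[C]_n) :
  qform (diag_mx (\row_k (d k)%:C)) v = (\sum_k d k * cmod (v k 0) ^+ 2)%:C.
Proof.
rewrite /qform mul_mx_diag !mxE rmorph_sum; apply: eq_bigr => k _.
by rewrite !mxE rmorphM /= -mul_conjc; ring.
Qed.

Lemma real_diag_mul_colv (d : 'I_n -> R) z k :
  (diag_mx (\row_k (d k)%:C) *m colv z) k 0 = (d k)%:C * z k.
Proof. by rewrite mul_diag_mx !mxE. Qed.

Variables (a : 'I_n -> R) (beta : R).
Local Notation energy := (energy a beta).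
Local Notation energy_grad := (energy_grad a beta).

Lemma fobjE z : fobj a beta z = energy (abs2 z) / 2.
Proof.
rewrite /fobj qform_real_diag /= /energy big_split /= !mulr_sumr mulrDl !mulr_suml.
by congr (_ + _); apply: eq_bigr => k _; rewrite /abs2 ?mxE -?exprM; field.
Qed.

Lemma lamE z : 2 * lam a beta z = \sum_k energy_grad (abs2 z) k * abs2 z k.
Proof.
rewrite /lam qform_real_diag /= /energy_grad.
under [RHS]eq_bigr do rewrite mulrDl.
rewrite big_split /= mulrDr !mulr_sumr.
by congr (_ + _); apply: eq_bigr => k _; rewrite /abs2 ?mxE -?exprM; field.
Qed.

Lemma Mstat_diag z : Mstat a beta z = diag_mx (\row_k (energy_grad (abs2 z) k)%:C).
Proof.
apply/matrixP => i j; rewrite !mxE /energy_grad.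
by case: eqP => _; rewrite ?mulr1n ?mulr0n ?addr0 // rmorphD.
Qed.

Lemma Hmat_diag z :
  Hmat a beta z = diag_mx (\row_k (energy_grad (abs2 z) k - 2 * lam a beta z)%:C).
Proof.
apply/matrixP => i j; rewrite /Hmat Mstat_diag !mxE.
by case: eqP => _; rewrite ?mulr1n ?mulr0n ?subr0 // rmorphB.
Qed.

Lemma stationaryP z : stationary a beta z <->
  exists l, forall k, z k != 0 -> energy_grad (abs2 z) k = l.
Proof.
rewrite /stationary Mstat_diag; split=> [[l eq_l]|[l eq_l]].
  exists (2 * l) => k zk; have := congr1 (fun v : 'cV[C]_n => v k 0) eq_l.
  by rewrite /= real_diag_mul_colv !mxE => /(mulIf zk) /complexI.
exists (l / 2); apply/matrixP => k j; rewrite (ord1 j) real_diag_mul_colv !mxE.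
have [->|zk] := eqVneq (z k) 0; first by rewrite !mulr0.
by rewrite eq_l // [2 * _]mulrC divfK ?pnatr_eq0.
Qed.

Lemma psd_HmatP z : psd (Hmat a beta z) <->
  forall k, 2 * lam a beta z <= energy_grad (abs2 z) k.
Proof.
rewrite /psd Hmat_diag; split=> [H k|H v].
  have := H (\col_j (j == k)%:R); rewrite qform_real_diag ler0c (bigD1 k) //= big1 ?addr0.
    by rewrite mxE eqxx cmod_real normr1 expr1n mulr1 subr_ge0.
  by move=> i /negPf ik; rewrite mxE ik cmod_real normr0 expr0n /= mulr0.
rewrite qform_real_diag ler0c; apply: sumr_ge0 => k _.
by rewrite mulr_ge0 ?sqr_ge0 // subr_ge0.
Qed.

Lemma stationary_psd_slopeP z : on_sphere z ->
  stationary a beta z /\ psd (Hmat a beta z) <->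
  forall v, in_simplex v -> 0 <= slope a beta (abs2 z) v.
Proof.
move=> z_sphere; have support k : abs2 z k != 0 <-> z k != 0 by rewrite abs2_eq0.
rewrite /slope simplex_KKTP; last exact: sphere_simplex.
rewrite stationaryP psd_HmatP; split=> [[[l eq_l] lam_le]|[l [l_le eq_l]]].
  have l_lam : l = 2 * lam a beta z.
    by rewrite lamE (sum_support_const (l := l) z_sphere) // => k /support /eq_l.
  by exists l; split=> [k|k /support /eq_l //]; rewrite l_lam.
have l_lam : l = 2 * lam a beta z by rewrite lamE (sum_support_const (l := l) z_sphere).
by split; [exists l => k /support /eq_l | move=> k; rewrite -l_lam].
Qed.

Definition lift_sphere z u : 'I_n -> C := fun k => (Num.sqrt (u k))%:C * phase (z k).

Lemma abs2_lift_sphere z u k : 0 <= u k -> abs2 (lift_sphere z u) k = u k.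
Proof. by move=> u_ge0; rewrite /abs2 cmod_real_phase ger0_norm ?sqrtr_ge0 // sqr_sqrtr. Qed.

Lemma lift_sphere_abs2 z k : lift_sphere z (abs2 z) k = z k.
Proof. by rewrite /lift_sphere /abs2 sqrtr_sqr ger0_norm ?cmod_ge0 // -polar_phase. Qed.

Lemma lift_sphere_dist z u : (forall k, 0 <= u k) ->
  \sum_k cmod (lift_sphere z u k - z k) ^+ 2 <= \sum_k `|u k - abs2 z k|.
Proof.
move=> u_ge0; apply: ler_sum => k _.
rewrite -{1}(lift_sphere_abs2 z k) /lift_sphere -mulrBl -rmorphB cmod_real_phase.
by rewrite real_normK ?num_real // sqr_sqrtrB_le ?abs2_ge0.
Qed.

Lemma local_min_sphere_simplex z :
  local_min_sphere a beta z -> simplex_local_min a beta (abs2 z).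
Proof.
move=> [_ [eps [eps_gt0 z_min]]]; exists (eps ^+ 2); first exact: exprn_gt0.
move=> v [v_ge0 v_sum1] v_near.
have w_sphere : on_sphere (lift_sphere z v).
  by rewrite /on_sphere -v_sum1; apply: eq_bigr => k _; rewrite abs2_lift_sphere.
have w_near : \sum_k cmod (lift_sphere z v k - z k) ^+ 2 < eps ^+ 2.
  exact: le_lt_trans (lift_sphere_dist z v_ge0) v_near.
have := z_min _ w_sphere w_near; rewrite !fobjE ler_pM2r ?invr_gt0 //.
suff -> : energy (abs2 (lift_sphere z v)) = energy v by [].
by apply: eq_bigr => k _; rewrite abs2_lift_sphere.
Qed.

Hypothesis beta_gt0 : 0 < beta.

Lemma local_min_sphere_slopeP z : on_sphere z ->
  local_min_sphere a beta z <->
  forall v, in_simplex v -> 0 <= slope a beta (abs2 z) v.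
Proof.
move=> z_sphere; split=> [z_min|z_VI].
  apply: simplex_local_min_slope; first exact: sphere_simplex.
  exact: local_min_sphere_simplex.
split=> //; exists 1; split=> // w w_sphere _.
rewrite !fobjE ler_pM2r ?invr_gt0 //.
by apply: slope_ge0_energy_min => //; apply: z_VI; exact: sphere_simplex.
Qed.

End Sphere.

Theorem theorem6 (R : realType) (n : nat) (a : 'I_n -> R) (beta : R) :
  0 < beta ->
  (forall z : 'I_n -> R[i], on_sphere z ->
     (local_min_sphere a beta z <->
      (stationary a beta z /\ psd (Hmat a beta z)))) /\
  (forall z : 'I_n -> R[i], local_min_sphere a beta z ->
     forall u : 'I_n -> R, is_proj_simplex (fun k => - a k / (2 * beta)) u ->
     exists theta : 'I_n -> R, forall k,
       0 <= theta k < 2 * pi /\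
       z k = ((Num.sqrt (u k))%:C * (cos (theta k) +i* sin (theta k)))%C).
Proof.
move=> beta_gt0; split=> [z z_sphere|z z_min u u_proj].
  by rewrite local_min_sphere_slopeP // stationary_psd_slopeP.
have z_sphere := z_min.1.
have u_abs2 := slope_ge0_proj_simplex beta_gt0 (sphere_simplex z_sphere)
  ((local_min_sphere_slopeP a beta_gt0 z_sphere).1 z_min) u_proj.
exists (fun k => carg (phase (z k))) => k.
have [carg_itv carg_polar] := unit_carg (cmod_phase (z k)).
split=> //; rewrite -carg_polar u_abs2; exact: esym (lift_sphere_abs2 z k).
Qed.
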